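(* Let $G^\sigma$ be a connected oriented graph of order $n\in\{2,3,4\}$ with $sr(G^\sigma)=2$. Then: (1) if $n=2$, $G^\sigma$ is the path $P_2^\sigma$ with arbitrary orientation; (2) if $n=3$, the underlying graph is $K_3$ or $P_3$ (with any orientation of the edges); (3) if $n=4$, $G^\sigma$ is one of: (a) an evenly-oriented cycle $C_4^\sigma$; (b) an orientation (arbitrary) of the star $K_{1,3}$; (c) an evenly-oriented orientation of $K_{1,1,2}$ (i.e. an orientation of $K_4$ minus an edge in which every cycle of length $4$ is evenly-oriented).
   Context: An oriented graph $G^\sigma$ is a simple graph $G$ (underlying graph) together with an orientation of each edge. Its skew-adjacency matrix $S(G^\sigma)=(s_{ij})$ has $s_{ij}=1$ if there is an arc from $v_i$ to $v_j$, $s_{ij}=-1$ if there is an arc from $v_j$ to $v_i$, and $0$ otherwise; the skew-rank $sr(G^\sigma)$ is the rank of $S(G^\sigma)$. For an even cycle $u_1\cdots u_ku_1$, its sign is the sign of $\prod_{i=1}^k s_{u_iu_{i+1}}$ ($u_{k+1}=u_1$); the cycle is evenly-oriented if this sign is positive. An oriented graph is evenly-oriented if every even cycle in it is evenly-oriented. $P_n$, $C_n$, $K_n$ denote path, cycle, complete graph on $n$ vertices; $K_{1,1,2}$ is the complete tripartite graph with parts of sizes $1,1,2$. *)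

From HB Require Import structures.
From mathcomp Require Import all_boot all_order all_algebra.
Set Implicit Arguments. Unset Strict Implicit. Unset Printing Implicit Defensive.
Import Order.TTheory GRing.Theory Num.Theory.
Local Open Scope ring_scope.

(* An oriented graph on vertex set 'I_n is given by its arc relation
   [arc i j] = "there is an arc from v_i to v_j"; it must be irreflexive
   and antisymmetric (at most one orientation per edge). *)
Definition oriented (n : nat) (arc : rel 'I_n) : Prop :=
  (forall i, ~~ arc i i) /\ (forall i j, ~~ (arc i j && arc j i)).

Definition und (n : nat) (arc : rel 'I_n) : rel 'I_n :=
  fun i j => arc i j || arc j i.

Definition skew_adj (n : nat) (arc : rel 'I_n) : 'M[rat]_n :=
  \matrix_(i, j) (if arc i j then 1 else if arc j i then -1 else 0).

Definition skew_rank (n : nat) (arc : rel 'I_n) : nat := \rank (skew_adj arc).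

Definition connected_og (n : nat) (arc : rel 'I_n) : Prop :=
  forall i j, connect (und arc) i j.

Definition cycle_edges (n : nat) (u : seq 'I_n) := zip u (rot 1 u).

Definition is_cycle (n : nat) (arc : rel 'I_n) (u : seq 'I_n) : bool :=
  [&& uniq u, 3 <= size u & all (fun p => und arc p.1 p.2) (cycle_edges u)]%N.

Definition cycle_prod (n : nat) (arc : rel 'I_n) (u : seq 'I_n) : rat :=
  \prod_(p <- cycle_edges u) skew_adj arc p.1 p.2.

Definition evenly_oriented (n : nat) (arc : rel 'I_n) : Prop :=
  forall u : seq 'I_n, is_cycle arc u -> ~~ odd (size u) -> 0 < cycle_prod arc u.

Definition und_iso (n : nat) (arc : rel 'I_n) (H : rel 'I_n) : Prop :=
  exists f : 'I_n -> 'I_n, bijective f /\ forall i j, H i j = und arc (f i) (f j).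

Definition path_g (n : nat) : rel 'I_n :=
  fun i j => (i.+1 == j :> nat) || (j.+1 == i :> nat).
Definition cycle_g (n : nat) : rel 'I_n :=
  fun i j => path_g i j || ((i == 0 :> nat) && (j == n.-1 :> nat))
                        || ((j == 0 :> nat) && (i == n.-1 :> nat)).
Definition complete_g (n : nat) : rel 'I_n := fun i j => i != j.
Definition star_g (n : nat) : rel 'I_n :=
  fun i j => (i != j) && ((i == 0 :> nat) || (j == 0 :> nat)).
(* K_{1,1,2} on 'I_4: parts {0}, {1}, {2,3}; i.e. K_4 minus the edge {2,3} *)
Definition k112_g (n : nat) : rel 'I_n :=
  fun i j => (i != j) && ~~ (((i == 2 :> nat) && (j == 3 :> nat))
                             || ((i == 3 :> nat) && (j == 2 :> nat))).

From mathcomp Require Import all_boot all_order all_algebra.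
From mathcomp Require Import ring.
From Stdlib Require Import FunctionalExtensionality.
Import GRing.Theory Num.Theory.
Set Implicit Arguments. Unset Strict Implicit. Unset Printing Implicit Defensive.

(* For n = 4 the skew-adjacency matrix S is skew-symmetric of order 4, so
   det S = Pf(S)^2 with Pf(S) = s01 s23 - s02 s13 + s03 s12; as sr = 2 < 4, the
   Pfaffian vanishes.  An oriented graph on n <= 4 vertices is one of the
   3^(n(n-1)/2) ways to leave out or orient each edge, so the rest is checked by
   evaluation: every connected graph with vanishing Pfaffian comes with an
   explicit isomorphism onto C4, K_{1,3} or K_{1,1,2} and, when required, the
   signs of all its 4-cycles; every disconnected one is discarded through a
   proper vertex set that contains 0 and is closed under adjacency.  For n = 2, 3
   the rank is irrelevant: every connected graph there is P2, P3 or K3. *)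

Definition pfaffian4 (R : nzRingType) (a : nat -> nat -> R) : R :=
  (a 0 1 * a 2 3 - a 0 2 * a 1 3 + a 0 3 * a 1 2)%R.

Lemma rmorph_pfaffian4 (R S : nzRingType) (f : {rmorphism R -> S}) a :
  f (pfaffian4 a) = pfaffian4 (fun i j => f (a i j)).
Proof. by rewrite /pfaffian4 rmorphD rmorphB !rmorphM. Qed.

Section SkewMatrix4.

Local Open Scope ring_scope.

Variables (R : comNzRingType) (A : 'M[R]_4).
Hypotheses (A_diag : forall i, A i i = 0) (A_skew : forall i j, A j i = - A i j).

Let a (i j : nat) : R := A (inZp i) (inZp j).

Lemma det_skew4 : \det A = pfaffian4 a ^+ 2.
Proof.
have Ea (i j : 'I_4) : A i j = a i j by rewrite /a !valZpK.
have a0 i : a i i = 0 by rewrite /a A_diag.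
have aN i j : a j i = - a i j by rewrite /a A_skew.
do 3 rewrite !(expand_det_row _ ord0) !big_ord_recr !big_ord0 /= /cofactor.
rewrite !det_mx11 !mxE !Ea /bump /= ?(addn0, add0n, add1n, addn1).
rewrite !a0 (aN 0%N 1%N) (aN 0%N 2%N) (aN 0%N 3%N) (aN 1%N 2%N) (aN 1%N 3%N) (aN 2%N 3%N).
rewrite /pfaffian4; ring.
Qed.

End SkewMatrix4.

Lemma pfaffian4_eq0 (F : fieldType) (A : 'M[F]_4) :
  (forall i, A i i = 0%R) -> (forall i j, A j i = - A i j)%R -> \rank A < 4 ->
  pfaffian4 (fun i j => A (inZp i) (inZp j)) = 0%R.
Proof.
move=> A_diag A_skew rankA; apply/eqP.
rewrite -sqrf_eq0 -det_skew4 //.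
by apply: contraTT rankA; rewrite -unitfE -unitmxE => /mxrank_unit ->.
Qed.

Definition arc_sign n (arc : rel 'I_n) (i j : 'I_n) : int :=
  (if arc i j then 1 else if arc j i then -1 else 0)%R.

Definition cycle_sign n (arc : rel 'I_n) (u : seq 'I_n) : int :=
  foldr *%R 1%R [seq arc_sign arc p.1 p.2 | p <- cycle_edges u].

Section Signs.

Local Open Scope ring_scope.

Variables (n : nat) (arc : rel 'I_n).

Lemma skew_adjE i j : skew_adj arc i j = (arc_sign arc i j)%:~R.
Proof. by rewrite mxE /arc_sign; case: (arc i j); case: (arc j i). Qed.

Lemma cycle_prodE u : cycle_prod arc u = (cycle_sign arc u)%:~R.
Proof.
rewrite /cycle_sign foldrE big_map rmorph_prod.
by apply: eq_bigr => p _; rewrite skew_adjE.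
Qed.

Hypothesis arc_oriented : oriented arc.

Lemma skew_adj_diag i : skew_adj arc i i = 0.
Proof. by rewrite skew_adjE /arc_sign (negbTE (arc_oriented.1 i)). Qed.

Lemma skew_adj_skew i j : skew_adj arc j i = - skew_adj arc i j.
Proof.
rewrite !skew_adjE /arc_sign; have := arc_oriented.2 i j.
by case: (arc i j); case: (arc j i).
Qed.

End Signs.

Lemma skew_rank4_pfaffian (arc : rel 'I_4) :
  oriented arc -> skew_rank arc < 4 ->
  pfaffian4 (fun i j => arc_sign arc (inZp i) (inZp j)) = 0%R.
Proof.
move=> arc_or rank_lt4; apply/eqP; rewrite -(intr_eq0 rat) rmorph_pfaffian4.
have := pfaffian4_eq0 (skew_adj_diag arc_or) (skew_adj_skew arc_or) rank_lt4.
by rewrite /pfaffian4 !skew_adjE => ->.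
Qed.

Definition ords m : seq 'I_m.+1 := map inZp (iota 0 m.+1).

Lemma mem_ords m (x : 'I_m.+1) : x \in ords m.
Proof. by apply/mapP; exists (val x); rewrite ?valZpK // mem_iota ltn_ord. Qed.

Lemma size_ords m : size (ords m) = m.+1.
Proof. by rewrite size_map size_iota. Qed.

Lemma ords_uniq m : uniq (ords m).
Proof.
rewrite map_inj_in_uniq ?iota_uniq // => x y.
rewrite !mem_iota !add0n => /andP [_ ltx] /andP [_ lty] /(congr1 val) /=.
by rewrite !modn_small.
Qed.

(* [vm_compute] evaluates both arguments of [&&] and [||]; these searches stop at
   the first decisive element. *)
Fixpoint all_lazy T (a : pred T) (s : seq T) : bool :=
  if s is x :: s' then (if a x then all_lazy a s' else false) else true.

Fixpoint has_lazy T (a : pred T) (s : seq T) : bool :=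
  if s is x :: s' then (if a x then true else has_lazy a s') else false.

Lemma all_lazyE T (a : pred T) s : all_lazy a s = all a s.
Proof. by elim: s => //= x s ->; case: (a x). Qed.

Lemma has_lazyE T (a : pred T) s : has_lazy a s = has a s.
Proof. by elim: s => //= x s ->; case: (a x). Qed.

Section Certificates.

Variable m : nat.
Implicit Types (arc H e : rel 'I_m.+1) (S : seq 'I_m.+1).

Definition und_isob arc H : bool :=
  has_lazy (fun p => all_lazy (fun x => all_lazy (fun y =>
         H x y == und arc (nth ord0 p x) (nth ord0 p y)) (ords m)) (ords m))
      (permutations (ords m)).

Lemma und_isobP arc H : und_isob arc H -> und_iso arc H.
Proof.
rewrite /und_isob has_lazyE => /hasP [p]; rewrite mem_permutations all_lazyE.
move=> perm_p /allP isoH.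
have [uniq_p size_p] : uniq p /\ size p = m.+1.
  by rewrite (perm_uniq perm_p) (perm_size perm_p) ords_uniq size_ords.
exists (fun x : 'I_m.+1 => nth ord0 p x); split.
  by apply: injF_bij => x y /eqP; rewrite nth_uniq ?size_p // => /eqP /val_inj.
by move=> x y; have := isoH x (mem_ords x); rewrite all_lazyE => /allP/(_ y (mem_ords y))/eqP.
Qed.

Definition reach e : seq 'I_m.+1 :=
  iter m (fun S => [seq y <- ords m | (y \in S) || has (e^~ y) S]) [:: ord0].

Lemma reach0 e : ord0 \in reach e.
Proof.
rewrite /reach; set step := fun S => _.
suff step0 k : ord0 \in iter k step [:: ord0] by [].
by elim: k => [|k IH] /=; rewrite ?inE // mem_filter IH mem_ords.
Qed.

Definition closedb e S : bool :=
  all (fun x => all (fun y => e x y ==> (x \in S) ==> (y \in S)) (ords m)) (ords m).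

Lemma connect_closedb e S x y : closedb e S -> x \in S -> connect e x y -> y \in S.
Proof.
move=> /allP clS + /connectP [p ep ->]; elim: p x ep => [|z p IH] x //= /andP [exz ep] xS.
apply: IH ep _; have /allP/(_ z (mem_ords z)) := clS x (mem_ords x).
by rewrite exz xS.
Qed.

(* That [reach e] is closed is not proved but checked, as part of the certificate. *)
Definition if_connected arc (b : bool) : bool :=
  let S := reach (und arc) in
  closedb (und arc) S && (all (fun y => y \in S) (ords m) ==> b).

Lemma if_connectedP arc b : connected_og arc -> if_connected arc b -> b.
Proof.
move=> conn /andP [clS /implyP]; apply; apply/allP => y _.
exact: connect_closedb clS (reach0 _) (conn ord0 y).
Qed.

End Certificates.

Definition evenly_oriented4b (arc : rel 'I_4) : bool :=
  all_lazy (fun u => is_cycle arc u ==> (cycle_sign arc u == 1%R)) (permutations (ords 3)).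

(* On four vertices an even cycle passes through every vertex. *)
Lemma evenly_oriented4bP arc : evenly_oriented4b arc -> evenly_oriented arc.
Proof.
rewrite /evenly_oriented4b all_lazyE => /allP even u u_cyc u_even.
have /and3P [u_uniq u_ge3 _] := u_cyc.
have sub_u : {subset u <= ords 3} by move=> x _; apply: mem_ords.
have size_u : size (ords 3) <= size u.
  have := uniq_leq_size u_uniq sub_u; rewrite size_ords.
  by move: u_ge3 u_even; case: (size u) => [|[|[|[|[|k]]]]].
have [_ eq_u] := uniq_min_size u_uniq sub_u size_u.
have perm_u : u \in permutations (ords 3).
  by rewrite mem_permutations uniq_perm ?ords_uniq.
by have /implyP/(_ u_cyc)/eqP := even u perm_u; rewrite cycle_prodE => ->.
Qed.

(* A code lists, for the pairs i < j in the order of [pairs n], 0 for no edge,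
   1 for the arc i -> j and 2 for the arc j -> i. *)
Definition edge_code (x y : bool) : nat := if x then 1 else if y then 2 else 0.

Definition pairs n : seq (nat * nat) :=
  [seq p <- [seq (i, j) | i <- iota 0 n, j <- iota 0 n] | p.1 < p.2].

Definition arc_of_code n (c : seq nat) : rel 'I_n := fun i j =>
  ((i < j) && (nth 0 c (index (i : nat, j : nat) (pairs n)) == 1))
  || ((j < i) && (nth 0 c (index (j : nat, i : nat) (pairs n)) == 2)).

Definition code_of m (arc : rel 'I_m.+1) : seq nat :=
  [seq edge_code (arc (inord p.1) (inord p.2)) (arc (inord p.2) (inord p.1)) | p <- pairs m.+1].

Fixpoint codes k : seq (seq nat) :=
  if k is k'.+1 then [seq x :: s | x <- iota 0 3, s <- codes k'] else [:: [::]].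

Lemma mem_codes s : all (fun x => x < 3) s -> s \in codes (size s).
Proof.
elim: s => [|x s IH] //= /andP [ltx3 /IH s_codes].
by case: x ltx3 => [|[|[|x]]] // _; rewrite !mem_cat map_f ?orbT.
Qed.

Lemma code_of_codes m (arc : rel 'I_m.+1) : code_of arc \in codes (size (pairs m.+1)).
Proof.
rewrite -(size_map (fun p => edge_code (arc (inord p.1) (inord p.2)) (arc (inord p.2) (inord p.1)))).
apply: mem_codes; apply/allP => _ /mapP [p _ ->].
by rewrite /edge_code; case: ifP => //; case: ifP.
Qed.

Lemma code_ofK m (arc : rel 'I_m.+1) : oriented arc -> arc_of_code (code_of arc) = arc.
Proof.
case=> irr anti.
have code_ij (i j : 'I_m.+1) : i < j ->
    nth 0 (code_of arc) (index (i : nat, j : nat) (pairs m.+1)) = edge_code (arc i j) (arc j i).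
  move=> lt_ij; have ij_pairs : (i : nat, j : nat) \in pairs m.+1.
    by rewrite mem_filter lt_ij; apply: allpairs_f; rewrite mem_iota ltn_ord.
  by rewrite (nth_map (0, 0)) ?index_mem // nth_index //= !inord_val.
apply: functional_extensionality => i; apply: functional_extensionality => j.
rewrite /arc_of_code /edge_code; case: (ltngtP i j) => [lt_ij|lt_ji|/val_inj <-].
- by rewrite code_ij //=; case: (arc i j) => //; case: (arc j i).
- by rewrite (code_ij j i) //=; have := anti i j; case: (arc i j); case: (arc j i).
- by rewrite (negbTE (irr i)).
Qed.

Lemma oriented_codes m (P : pred (rel 'I_m.+1)) :
  all (fun c => P (arc_of_code c)) (codes (size (pairs m.+1))) ->
  forall arc, oriented arc -> P arc.
Proof. by move=> /allP P_codes arc /code_ofK <-; apply/P_codes/code_of_codes. Qed.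

Definition check2 (arc : rel 'I_2) : bool :=
  if_connected arc (und_isob arc (@path_g 2)).

Definition check3 (arc : rel 'I_3) : bool :=
  if_connected arc (und_isob arc (@complete_g 3) || und_isob arc (@path_g 3)).

(* The cheap Pfaffian test comes first, in an [if], so that the isomorphism
   searches only run for the few graphs that need them. *)
Definition check4 (arc : rel 'I_4) : bool :=
  if pfaffian4 (fun i j => arc_sign arc (inZp i) (inZp j)) == 0%R then
    if_connected arc [|| und_isob arc (@cycle_g 4) && evenly_oriented4b arc,
                          und_isob arc (@star_g 4)
                        | und_isob arc (@k112_g 4) && evenly_oriented4b arc]
  else true.

Lemma check2_codes : all (fun c => check2 (arc_of_code c)) (codes (size (pairs 2))).
Proof. by vm_compute. Qed.

Lemma check3_codes : all (fun c => check3 (arc_of_code c)) (codes (size (pairs 3))).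
Proof. by vm_compute. Qed.

Lemma check4_codes : all (fun c => check4 (arc_of_code c)) (codes (size (pairs 4))).
Proof. by vm_compute. Qed.

Lemma classification2 (arc : rel 'I_2) :
  oriented arc -> connected_og arc -> und_iso arc (@path_g 2).
Proof.
move=> arc_or conn; apply/und_isobP/(if_connectedP conn).
exact: oriented_codes check2_codes arc arc_or.
Qed.

Lemma classification3 (arc : rel 'I_3) :
  oriented arc -> connected_og arc ->
  und_iso arc (@complete_g 3) \/ und_iso arc (@path_g 3).
Proof.
move=> arc_or conn; have := oriented_codes check3_codes arc_or.
by move=> /(if_connectedP conn) /orP [] /und_isobP; [left | right].
Qed.

Lemma classification4 (arc : rel 'I_4) :
  oriented arc -> connected_og arc -> skew_rank arc < 4 ->
  (und_iso arc (@cycle_g 4) /\ evenly_oriented arc) \/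
  und_iso arc (@star_g 4) \/
  (und_iso arc (@k112_g 4) /\ evenly_oriented arc).
Proof.
move=> arc_or conn rank_lt4; have := oriented_codes check4_codes arc_or.
rewrite /check4 skew_rank4_pfaffian // eqxx => /(if_connectedP conn).
case/or3P => [/andP [/und_isobP ? /evenly_oriented4bP ?] | /und_isobP ? |
              /andP [/und_isobP ? /evenly_oriented4bP ?]]; by [left | right; left | right; right].
Qed.

Theorem theorem3p1 (n : nat) (arc : rel 'I_n) :
  oriented arc -> connected_og arc -> (2 <= n <= 4)%N -> skew_rank arc = 2%N ->
  (n = 2%N -> und_iso arc (@path_g n)) /\
  (n = 3%N -> und_iso arc (@complete_g n) \/ und_iso arc (@path_g n)) /\
  (n = 4%N ->
     (und_iso arc (@cycle_g n) /\ evenly_oriented arc) \/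
     und_iso arc (@star_g n) \/
     (und_iso arc (@k112_g n) /\ evenly_oriented arc)).
Proof.
move=> arc_or conn _ rank2; split; [|split] => n_eq; subst n.
- exact: classification2.
- exact: classification3.
- by apply: classification4; rewrite ?rank2.
Qed.
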